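(* Consider the following convex (second-order cone) optimal control problem for $N$ electric vehicles (EVs) charged through a single transformer over $K$ time steps $k=0,\dots,K-1$. The decision variables are the charging currents $i_n(k)$, states of charge $s_n(k+1)$ ($n=1,\dots,N$), total currents $i_{\text{total}}(k)$, auxiliary variables $e(k)$, and transformer temperatures $T(k+1)$: \begin{align*} \min\;& \sum_{n=1}^N\sum_{k=0}^{K-1} q_n\,(s_n(k+1)-1)^2 + r_n\,(i_n(k))^2\\ \text{s.t. }& T(k+1)=\tau T(k)+\gamma e(k)+\rho T_a(k),\\ & e(k)\ge (i_{\text{total}}(k))^2,\\ & s_n(k+1)=s_n(k)+\eta_n i_n(k),\\ & i_{\text{total}}(k)=i_d(k)+\sum_{n=1}^N i_n(k),\\ & T(k+1)\le T^{\max},\\ & s_n(k+1)\in[\hat s_n(k+1),\,1],\\ & i_n(k)\in[0,\,i_n^{\max}],\\ & T(0)=T_{\text{meas}},\quad s_n(0)=s_{\text{meas},n}, \end{align*} for all $k=0,\dots,K-1$ and $n=1,\dots,N$. Fix EV parameters $r_n\ge 0$ and $\eta_n,q_n>0$. When $r_n>0$, let $M_n\doteq \frac{q_n}{r_n}\eta_n^2$. Suppose that at an optimal solution of this problem there exist an index $n$ and a time step $k$ such that $i_n(k)<i_n^{\max}$ and $$s_n(k+1)<\begin{cases}1 & \text{if } r_n=0,\\[2pt] \dfrac{M_n+s_n(0)}{M_n+1} & \text{if } r_n>0.\end{cases}$$ Then $e(l)=(i_{\text{total}}(l))^2$ for all $l\le k$.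
   Context: The problem arises from a discrete-time transformer hot-spot temperature model $T(k+1)=\tau T(k)+\gamma (i_{\text{total}}(k))^2+\rho T_a(k)$, in which the quadratic equality has been relaxed to the epigraph inequality $e(k)\ge (i_{\text{total}}(k))^2$. The parameters are as follows: - $\tau=e^{-b\Delta t}\in(0,1)$ for some $b,\Delta t>0$, and $\rho=1-\tau$; - $\gamma>0$; - $T_a(k)$ is a given (shifted) ambient temperature sequence; - $i_d(k)\ge 0$ is a given background current; - $T^{\max}$ is the transformer temperature limit; - $i_n^{\max}>0$ is the current limit of EV $n$; - $\eta_n>0$ is the normalized charging ratio of EV $n$; - $s_{\text{meas},n}\in[0,1]$ is the measured initial state of charge and $T_{\text{meas}}$ the measured initial temperature; - $\hat s_n(k+1)=\bar s_n$ if $k+1\ge \bar k_n$ and $\hat s_n(k+1)=0$ otherwise, where $\bar s_n\in[0,1]$ is a minimum required state of charge and $\bar k_n\in\{0,\dots,K\}$ the latest time step by which it must be reached. *)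

From HB Require Import structures.
From mathcomp Require Import all_boot all_order all_algebra.
From mathcomp Require Import all_classical all_reals all_analysis.
Set Implicit Arguments. Unset Strict Implicit. Unset Printing Implicit Defensive.
Import Order.TTheory GRing.Theory Num.Theory.
Local Open Scope ring_scope.

Section EVDefs.
Variable R : realType.

(* Minimum required state of charge: hat s_n(k) = sbar_n if k >= kbar_n, else 0.
   It is applied at time k+1 in the constraints. *)
Definition shat (sbar : R) (kbar : nat) (k : nat) : R :=
  if (kbar <= k)%N then sbar else 0.

(* Feasible set of the relaxed (SOCP) problem.  Decision variables are
   i n k, s n k, itot k, e k, T k; only indices k < K (resp. k+1 <= K) matter. *)
Definition ev_feasible (N K : nat) (tau gamma rho : R) (Ta id_ : nat -> R)
  (Tmax : R) (imax eta sbar : 'I_N -> R) (kbar : 'I_N -> nat)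
  (smeas : 'I_N -> R) (Tmeas : R)
  (i s : 'I_N -> nat -> R) (itot e T : nat -> R) : Prop :=
  (forall k, (k < K)%N -> T k.+1 = tau * T k + gamma * e k + rho * Ta k) /\
      (forall k, (k < K)%N -> itot k ^+ 2 <= e k) /\
      (forall n k, (k < K)%N -> s n k.+1 = s n k + eta n * i n k) /\
      (forall k, (k < K)%N -> itot k = id_ k + \sum_(n < N) i n k) /\
      (forall k, (k < K)%N -> T k.+1 <= Tmax) /\
      (forall n k, (k < K)%N ->
        shat (sbar n) (kbar n) k.+1 <= s n k.+1 <= 1) /\
      (forall n k, (k < K)%N -> 0 <= i n k <= imax n) /\
      T 0%N = Tmeas /\
      (forall n, s n 0%N = smeas n).

Definition ev_cost (N K : nat) (q r : 'I_N -> R) (i s : 'I_N -> nat -> R) : R :=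
  \sum_(n < N) \sum_(k < K) (q n * (s n k.+1 - 1) ^+ 2 + r n * (i n k) ^+ 2).

Definition ev_optimal (N K : nat) (tau gamma rho : R) (Ta id_ : nat -> R)
  (Tmax : R) (imax eta sbar : 'I_N -> R) (kbar : 'I_N -> nat)
  (smeas : 'I_N -> R) (Tmeas : R) (q r : 'I_N -> R)
  (i s : 'I_N -> nat -> R) (itot e T : nat -> R) : Prop :=
  ev_feasible K tau gamma rho Ta id_ Tmax imax eta sbar kbar smeas Tmeas i s itot e T /\
  forall (i' s' : 'I_N -> nat -> R) (itot' e' T' : nat -> R),
    ev_feasible K tau gamma rho Ta id_ Tmax imax eta sbar kbar smeas Tmeas
      i' s' itot' e' T' ->
    ev_cost K q r i s <= ev_cost K q r i' s'.

Definition soc_threshold (qn rn etan sn0 : R) : R :=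
  if rn == 0 then 1
  else let M := qn / rn * etan ^+ 2 in (M + sn0) / (M + 1).

End EVDefs.

From HB Require Import structures.
From mathcomp Require Import all_boot all_order all_algebra.
From mathcomp Require Import all_classical all_reals all_analysis.
From mathcomp Require Import ring lra zify.
Set Implicit Arguments. Unset Strict Implicit. Unset Printing Implicit Defensive.
Import Order.TTheory GRing.Theory Num.Theory.
Local Open Scope ring_scope.

(* Suppose e(l) > itot(l)^2 for some l <= k.  Move a small amount eps of EV n's
   charge from its next charging step j > k (j = K if there is none) to step k.
   Its state of charge then rises by eta_n eps exactly on (k, j] and stays below 1,
   and the threshold condition on s_n(k+1) makes this gain outweigh, to first
   order, the cost of the larger current.  The extra heat
   (itot(k) + eps)^2 - itot(k)^2 needed at k is paid for by lowering e(l) by the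
   slack: through T(m+1) = tau T(m) + ..., a decrease at l weighs tau^(k-l) times
   as much as an increase at k at every later time, so for small eps the
   temperature never rises.  The perturbed point is feasible and strictly cheaper,
   contradicting optimality. *)

Lemma ltr_sumD1 (R : numDomainType) (I : finType) (i0 : I) (F G : I -> R) :
  (forall i, i != i0 -> F i <= G i) -> F i0 < G i0 -> \sum_i F i < \sum_i G i.
Proof.
move=> FG FG0; rewrite [ltLHS](bigD1 i0) // [ltRHS](bigD1 i0) //=.
by rewrite ltr_leD // ler_sum.
Qed.

Lemma stage_cost_le (R : realDomainType) (q r s s' x x' : R) : 0 <= q -> 0 <= r ->
  s <= s' <= 1 -> 0 <= x' <= x ->
  q * (s' - 1) ^+ 2 + r * x' ^+ 2 <= q * (s - 1) ^+ 2 + r * x ^+ 2.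
Proof.
move=> q0 r0 /andP[ss' s'1] /andP[x'0 x'x]; apply: lerD; rewrite ler_wpM2l //.
  by rewrite !expr2; nra.
by rewrite ler_sqr ?nnegrE //; lra.
Qed.

Lemma soc_threshold_margin (R : realType) (qn rn etan s0 s1 x : R) :
  0 < qn -> 0 < etan -> 0 <= rn -> s0 <= 1 -> s0 + etan * x <= s1 ->
  s1 < soc_threshold qn rn etan s0 ->
  0 < 1 - s1 /\ rn * x < qn * etan * (1 - s1).
Proof.
move=> qn0 etan0 rn0 s01 hs1; rewrite /soc_threshold.
have [-> /= s1lt|rn_neq0] := eqVneq rn 0.
  by split; rewrite ?mul0r ?mulr_gt0 // subr_gt0.
have rn_gt0 : 0 < rn by rewrite lt_def rn_neq0.
set M := qn / rn * etan ^+ 2 => /=.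
have M_ge0 : 0 <= M by rewrite /M; apply: mulr_ge0; [apply: divr_ge0; lra | exact: sqr_ge0].
rewrite ltr_pdivlMr; last lra.
move=> s1lt; have s1_lt1 : s1 < 1 by nra.
split; first lra.
have rnM : rn * M = qn * etan ^+ 2 by rewrite /M; field; apply/eqP; lra.
have -> : rn * x = rn * (etan * x) / etan by field; lra.
have -> : qn * etan * (1 - s1) = rn * (M * (1 - s1)) / etan.
  by rewrite mulrA rnM; field; lra.
by rewrite ltr_pM2r ?invr_gt0 // ltr_pM2l //; lra.
Qed.

Lemma near0_affine_sqr_le (R : realFieldType) (a b : R) : 0 < b ->
  \forall x \near (0 : R)^'+%classic, a * x + x ^+ 2 <= b.
Proof.
move=> b0; near=> x.
have x0 : 0 < x by near: x; exact: nbhs_right_gt.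
have x1 : x < 1 by near: x; exact: nbhs_right_lt.
have xb : x < b / (`|a| + 1).
  by near: x; apply: nbhs_right_lt; rewrite divr_gt0 // ltr_wpDl.
rewrite ltr_pdivlMr ?ltr_wpDl // in xb.
have := ler_wpM2r (ltW x0) (ler_norm a).
rewrite expr2; nra.
Unshelve. all: by end_near.
Qed.

(* Response at time m of x(m+1) = tau x(m) + u(m), x(0) = 0, to the unit input at p. *)
Definition impulse {R : pzSemiRingType} (tau : R) (p m : nat) : R :=
  if (p < m)%N then tau ^+ (m - p.+1) else 0.

Lemma impulseS (R : pzSemiRingType) (tau : R) p m :
  impulse tau p m.+1 = tau * impulse tau p m + (m == p)%:R.
Proof.
rewrite /impulse ltnS; case: (ltngtP p m) => [pm|mp|<-].
- by rewrite addr0 -exprS subSn.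
- by rewrite mulr0 addr0.
- by rewrite subnn mulr0 add0r.
Qed.

Section Impulse.
Variables (R : numDomainType) (tau : R).
Hypothesis tau_ge0 : 0 <= tau.

Lemma impulse_ge0 p m : 0 <= impulse tau p m.
Proof. by rewrite /impulse; case: ifP => // _; exact: exprn_ge0. Qed.

Lemma impulse_delay_le l k m : (l <= k)%N ->
  tau ^+ (k - l) * impulse tau k m <= impulse tau l m.
Proof.
move=> lk; rewrite /impulse; case: (ltnP k m) => km; last first.
  by rewrite mulr0; case: ifP => // _; exact: exprn_ge0.
rewrite (leq_ltn_trans lk km) -exprD.
by have -> : (k - l + (m - k.+1) = m - l.+1)%N by lia.
Qed.

End Impulse.

Lemma exists_next_pos (R : realDomainType) (f : nat -> R) k K :
  (k < K)%N -> (forall m, (m < K)%N -> 0 <= f m) ->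
  exists j, [/\ (k < j <= K)%N, forall m, (k < m < j)%N -> f m = 0
             & (j < K)%N -> 0 < f j].
Proof.
move=> kK f_ge0.
have exP : exists j, (k < j)%N && ((j == K) || (0 < f j)) by exists K; rewrite kK eqxx.
case: (ex_minnP exP) => j /andP[kj jP] j_min; exists j; split.
- by rewrite kj j_min // kK eqxx.
- move=> m /andP[km mj]; have mK : (m < K)%N by have := j_min K; rewrite kK eqxx; lia.
  apply/eqP; rewrite eq_le f_ge0 // andbT leNgt; apply/negP => fm.
  by have := j_min m; rewrite km fm orbT; lia.
- by move=> jK; move: jP; rewrite ltn_eqF.
Qed.

Section Model.
Variables (R : realType) (N K : nat) (tau gamma rho : R) (Ta id_ : nat -> R).
Variables (Tmax : R) (imax eta sbar : 'I_N -> R) (kbar : 'I_N -> nat).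
Variables (smeas : 'I_N -> R) (Tmeas : R) (q r : 'I_N -> R).
Variables (i s : 'I_N -> nat -> R) (itot e T : nat -> R).
Hypothesis feas :
  ev_feasible K tau gamma rho Ta id_ Tmax imax eta sbar kbar smeas Tmeas i s itot e T.
Hypotheses (tau_gt0 : 0 < tau) (gamma_ge0 : 0 <= gamma) (id_ge0 : forall m, 0 <= id_ m).
Hypothesis eta_gt0 : forall n, 0 < eta n.
Hypotheses (q_ge0 : forall n, 0 <= q n) (r_ge0 : forall n, 0 <= r n).

Let temp_rec m : (m < K)%N -> T m.+1 = tau * T m + gamma * e m + rho * Ta m.
Proof. by case: feas => + _; apply. Qed.

Let heat_ge m : (m < K)%N -> itot m ^+ 2 <= e m.
Proof. by case: feas => _ [+ _]; apply. Qed.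

Let soc_rec n m : (m < K)%N -> s n m.+1 = s n m + eta n * i n m.
Proof. by case: feas => _ [_ [+ _]]; apply. Qed.

Let itot_def m : (m < K)%N -> itot m = id_ m + \sum_(n < N) i n m.
Proof. by case: feas => _ [_ [_ [+ _]]]; apply. Qed.

Let temp_le_max m : (m < K)%N -> T m.+1 <= Tmax.
Proof. by case: feas => _ [_ [_ [_ [+ _]]]]; apply. Qed.

Let soc_bounds n m : (m < K)%N -> shat (sbar n) (kbar n) m.+1 <= s n m.+1 <= 1.
Proof. by case: feas => _ [_ [_ [_ [_ [+ _]]]]]; apply. Qed.

Let cur_bounds n m : (m < K)%N -> 0 <= i n m <= imax n.
Proof. by case: feas => _ [_ [_ [_ [_ [_ [+ _]]]]]]; apply. Qed.

Let cur_ge0 n m : (m < K)%N -> 0 <= i n m.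
Proof. by move=> /(cur_bounds n)/andP[]. Qed.

Let soc_ge_init n m : (m <= K)%N -> s n 0 <= s n m.
Proof.
elim: m => [//|m IH] mK.
by rewrite soc_rec // (le_trans (IH (ltnW mK))) // lerDl mulr_ge0 ?cur_ge0 // ltW.
Qed.

Lemma soc_init_step_le n m : (m < K)%N -> s n 0 + eta n * i n m <= s n m.+1.
Proof. by move=> mK; rewrite soc_rec // lerD2r soc_ge_init // ltnW. Qed.

Let soc_const n a b : (b <= K)%N -> (forall m, (a <= m < b)%N -> i n m = 0) ->
  forall m, (a <= m <= b)%N -> s n m = s n a.
Proof.
move=> bK i0; elim=> [|m IH] /andP[am mb]; first by rewrite leqn0 in am; rewrite (eqP am).
have [<-//|am'] := eqVneq a m.+1.
rewrite soc_rec; last lia.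
by rewrite i0 ?mulr0 ?addr0 ?IH //; apply/andP; split; lia.
Qed.

Section Perturbation.
Variables (n : 'I_N) (k l j : nat) (eps sig : R).
Hypotheses (kK : (k < K)%N) (lk : (l <= k)%N) (kj : (k < j)%N) (jK : (j <= K)%N).
Hypothesis i_gap : forall m, (k < m < j)%N -> i n m = 0.
Hypotheses (eps_gt0 : 0 < eps) (eps_imax : i n k + eps <= imax n).
Hypotheses (eps_soc : s n k.+1 + eta n * eps <= 1) (eps_j : (j < K)%N -> eps <= i n j).
Hypotheses (sig_ge0 : 0 <= sig) (sig_slack : itot l ^+ 2 + sig <= e l).
Hypothesis heat_shift_le : (itot k + eps) ^+ 2 - itot k ^+ 2 <= sig * tau ^+ (k - l).

(* eps of EV n's current moves from step j to step k (for j = K nothing is taken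
   back); the heat input gains D at k and loses the slack sig at l, and by
   impulseS pert_T is the temperature this produces. *)
Let D := (itot k + eps) ^+ 2 - itot k ^+ 2.
Let shift m := if m == k then eps else if m == j then - eps else 0.
Let pert_i n' m := i n' m + (if n' == n then shift m else 0).
Let pert_s n' m := s n' m + (if (n' == n) && (k < m <= j)%N then eta n * eps else 0).
Let pert_itot m := itot m + shift m.
Let pert_e m := e m + D * (m == k)%:R - sig * (m == l)%:R.
Let pert_T m := T m + gamma * (D * impulse tau k m - sig * impulse tau l m).

Let cur_le_itot m : (m < K)%N -> i n m <= itot m.
Proof.
move=> mK; rewrite itot_def // (bigD1 n) //= addrCA lerDl addr_ge0 //.
by rewrite sumr_ge0 // => n' _; exact: cur_ge0.
Qed.

Let shift_le0 m : m != k -> shift m <= 0.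
Proof. by rewrite /shift => /negbTE->; case: ifP; rewrite // oppr_le0 ltW. Qed.

Lemma pert_temp_rec m : (m < K)%N ->
  pert_T m.+1 = tau * pert_T m + gamma * pert_e m + rho * Ta m.
Proof. by move=> mK; rewrite /pert_T /pert_e !impulseS temp_rec //; ring. Qed.

Lemma pert_heat_ge m : (m < K)%N -> pert_itot m ^+ 2 <= pert_e m.
Proof.
move=> mK; rewrite /pert_itot /pert_e /shift.
have [->|mk] := eqVneq m k.
  rewrite mulr1n mulr1 /D; have [lk_eq|lk'] := eqVneq l k.
    by move: sig_slack; rewrite lk_eq mulr1n mulr1; lra.
  by rewrite mulr0n mulr0 subr0; have := heat_ge kK; lra.
rewrite mulr0n mulr0 addr0.
have [mj_eq|mj] := eqVneq m j.
  rewrite {}mj_eq in mK mk *; have -> : (j == l) = false by lia.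
  rewrite mulr0n mulr0 subr0; apply: le_trans (heat_ge mK).
  have eps_le := eps_j mK; have ij_le := cur_le_itot mK; have eps_ge0 := ltW eps_gt0.
  by rewrite ler_sqr ?nnegrE; lra.
have [->|ml] := eqVneq m l.
  by move: sig_slack; rewrite mulr1n mulr1; lra.
by rewrite addr0 mulr0n mulr0 subr0; exact: heat_ge.
Qed.

Lemma pert_soc_rec n' m : (m < K)%N ->
  pert_s n' m.+1 = pert_s n' m + eta n' * pert_i n' m.
Proof.
move=> mK; rewrite /pert_s /pert_i soc_rec //.
have [->|_] := eqVneq n' n; last by rewrite !addr0.
rewrite /shift /=; have [->|mk] := eqVneq m k.
  by rewrite ltnSn kj ltnn /=; ring.
have [->|mj] := eqVneq m j.
  by rewrite ltnn andbF kj leqnn /=; ring.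
have -> : (k < m.+1 <= j)%N = (k < m <= j)%N by apply/idP/idP; lia.
by ring.
Qed.

Lemma pert_itot_def m : (m < K)%N -> pert_itot m = id_ m + \sum_(n' < N) pert_i n' m.
Proof.
move=> mK; rewrite /pert_itot /pert_i itot_def // big_split /= -big_mkcond.
by rewrite big_pred1_eq addrA.
Qed.

Lemma pert_temp_le m : pert_T m <= T m.
Proof.
rewrite /pert_T gerDl mulr_ge0_le0 // subr_le0.
apply: (le_trans (y := sig * tau ^+ (k - l) * impulse tau k m)).
  by rewrite ler_wpM2r // impulse_ge0 // ltW.
by rewrite -mulrA ler_wpM2l // impulse_delay_le // ltW.
Qed.

Lemma pert_soc_bounds n' m : (m < K)%N -> s n' m.+1 <= pert_s n' m.+1 <= 1.
Proof.
move=> mK; rewrite /pert_s; case: ifP => [/and3P[/eqP-> km mj]|_].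
  rewrite (@soc_const n k.+1 j) ?km //= lerDl.
  by rewrite mulr_ge0 ?(ltW eps_gt0) ?(ltW (eta_gt0 n)).
by rewrite addr0 lexx; case/andP: (soc_bounds n' mK).
Qed.

Lemma pert_cur_ge0 n' m : (m < K)%N -> 0 <= pert_i n' m.
Proof.
move=> mK; rewrite /pert_i /shift.
have [->|_] := eqVneq n' n; last by rewrite addr0 cur_ge0.
case: eqP => _; first by rewrite addr_ge0 ?cur_ge0 ?ltW.
case: eqP => [mj|_]; last by rewrite addr0 cur_ge0.
by rewrite subr_ge0 mj eps_j // -mj.
Qed.

Lemma pert_cur_le n' m : (n' != n) || (m != k) -> pert_i n' m <= i n' m.
Proof.
rewrite /pert_i; have [->|_] := eqVneq n' n; last by rewrite addr0.
by move=> /= mk; rewrite gerDl shift_le0.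
Qed.

Lemma pert_cur_bounds n' m : (m < K)%N -> 0 <= pert_i n' m <= imax n'.
Proof.
move=> mK; apply/andP; split; first exact: pert_cur_ge0.
case: (boolP ((n' != n) || (m != k))) => [nk|].
  by apply: le_trans (pert_cur_le nk) _; case/andP: (cur_bounds n' mK).
rewrite negb_or !negbK => /andP[/eqP-> /eqP->].
by move: eps_imax; rewrite /pert_i /shift !eqxx.
Qed.

Lemma pert_feasible : ev_feasible K tau gamma rho Ta id_ Tmax imax eta sbar kbar
  smeas Tmeas pert_i pert_s pert_itot pert_e pert_T.
Proof.
case: feas => _ [_ [_ [_ [_ [_ [_ [T0 s0]]]]]]].
split; first exact: pert_temp_rec.
split; first exact: pert_heat_ge.
split; first exact: pert_soc_rec.
split; first exact: pert_itot_def.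
split; first by move=> m mK; rewrite (le_trans (pert_temp_le _)) ?temp_le_max.
split.
  move=> n' m mK; have /andP[lo _] := soc_bounds n' mK.
  by have /andP[ge ->] := pert_soc_bounds n' mK; rewrite (le_trans lo ge).
split; first exact: pert_cur_bounds.
split; first by rewrite /pert_T /impulse !mulr0 subrr mulr0 addr0.
by move=> n'; rewrite /pert_s ltn0 andbF addr0.
Qed.

Hypothesis gain :
  (q n * eta n ^+ 2 + r n) * eps < 2 * (q n * eta n * (1 - s n k.+1) - r n * i n k).

Lemma pert_cost_lt : ev_cost K q r pert_i pert_s < ev_cost K q r i s.
Proof.
have stage_le n' (m : 'I_K) : (n' != n) || (m != k :> nat) ->
    q n' * (pert_s n' m.+1 - 1) ^+ 2 + r n' * pert_i n' m ^+ 2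
    <= q n' * (s n' m.+1 - 1) ^+ 2 + r n' * i n' m ^+ 2.
  move=> nk; apply: stage_cost_le; rewrite ?pert_soc_bounds //.
  by rewrite pert_cur_ge0 ?pert_cur_le.
rewrite /ev_cost; apply: (ltr_sumD1 (i0 := n)) => [n' nn'|].
  by apply: ler_sum => m _; rewrite stage_le ?nn'.
apply: (ltr_sumD1 (i0 := Ordinal kK)) => [m mk|]; first by rewrite stage_le ?mk ?orbT.
rewrite /pert_s /pert_i /shift /= !eqxx ltnSn kj /= -subr_lt0.
set c := q n * eta n * (1 - s n k.+1) - r n * i n k.
have -> : q n * (s n k.+1 + eta n * eps - 1) ^+ 2 + r n * (i n k + eps) ^+ 2
    - (q n * (s n k.+1 - 1) ^+ 2 + r n * i n k ^+ 2)
    = eps * ((q n * eta n ^+ 2 + r n) * eps - 2 * c) by rewrite /c; ring.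
by rewrite pmulr_rlt0 // subr_lt0.
Qed.

Lemma perturbation_not_optimal :
  ~ ev_optimal K tau gamma rho Ta id_ Tmax imax eta sbar kbar smeas Tmeas q r i s itot e T.
Proof.
by case=> _ /(_ _ _ _ _ _ pert_feasible); rewrite leNgt pert_cost_lt.
Qed.

End Perturbation.

Lemma slack_not_optimal n k l : (k < K)%N -> (l <= k)%N -> i n k < imax n ->
  0 < 1 - s n k.+1 -> r n * i n k < q n * eta n * (1 - s n k.+1) ->
  itot l ^+ 2 < e l ->
  ~ ev_optimal K tau gamma rho Ta id_ Tmax imax eta sbar kbar smeas Tmeas q r i s itot e T.
Proof.
move=> kK lk ik_lt a_gt0 c_gt0 slack.
have [j [/andP[kj jK] i_gap i_j]] := exists_next_pos kK (@cur_ge0 n).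
set sig := e l - itot l ^+ 2.
have sig_gt0 : 0 < sig by rewrite subr_gt0.
set c := q n * eta n * (1 - s n k.+1) - r n * i n k.
have {}c_gt0 : 0 < c by rewrite subr_gt0.
have [eps [[eps_gt0 eps_imax eps_soc eps_j] [heat_le gain]]] : exists eps,
    [/\ 0 < eps, i n k + eps <= imax n, s n k.+1 + eta n * eps <= 1
       & (j < K)%N -> eps <= i n j] /\
    (itot k + eps) ^+ 2 - itot k ^+ 2 <= sig * tau ^+ (k - l) /\
    (q n * eta n ^+ 2 + r n) * eps < 2 * c.
  apply: (@filter_ex _ (0 : R)^'+%classic); near=> eps.
  have eps_gt0 : 0 < eps by near: eps; exact: nbhs_right_gt.
  have sqr_eps_ge0 := sqr_ge0 eps.
  split; [split=> //|split].
  - by rewrite -lerBrDl; near: eps; apply: nbhs_right_le; rewrite subr_gt0.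
  - have : eta n * eps + eps ^+ 2 <= 1 - s n k.+1.
      by near: eps; exact: near0_affine_sqr_le.
    by move: sqr_eps_ge0; lra.
  - have : eps <= if (j < K)%N then i n j else 1.
      by near: eps; apply: nbhs_right_le; case: ifP => // /i_j.
    by case: ifP.
  - have -> : (itot k + eps) ^+ 2 - itot k ^+ 2 = 2 * itot k * eps + eps ^+ 2 by ring.
    by near: eps; apply: near0_affine_sqr_le; rewrite mulr_gt0 // exprn_gt0.
  - have : (q n * eta n ^+ 2 + r n) * eps + eps ^+ 2 <= c.
      by near: eps; exact: near0_affine_sqr_le.
    by have := c_gt0; move: sqr_eps_ge0; lra.
have sig_slack : itot l ^+ 2 + sig <= e l by rewrite addrC subrK.
exact: (perturbation_not_optimal kK lk kj jK i_gap eps_gt0 eps_imax eps_soc eps_j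
  (ltW sig_gt0) sig_slack heat_le gain).
Unshelve. all: by end_near.
Qed.

End Model.

Theorem theorem1 (R : realType) (N K : nat) (b dt gamma : R)
  (Ta id_ : nat -> R) (Tmax : R) (imax eta q r sbar smeas : 'I_N -> R)
  (kbar : 'I_N -> nat) (Tmeas : R)
  (i s : 'I_N -> nat -> R) (itot e T : nat -> R) :
  0 < b -> 0 < dt -> 0 < gamma ->
  (forall k, 0 <= id_ k) ->
  (forall n, 0 < imax n) ->
  (forall n, 0 < eta n) ->
  (forall n, 0 < q n) ->
  (forall n, 0 <= r n) ->
  (forall n, 0 <= sbar n <= 1) ->
  (forall n, (kbar n <= K)%N) ->
  (forall n, 0 <= smeas n <= 1) ->
  ev_optimal K (expR (- (b * dt))) gamma (1 - expR (- (b * dt))) Ta id_ Tmax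
    imax eta sbar kbar smeas Tmeas q r i s itot e T ->
  forall (n : 'I_N) (k : nat), (k < K)%N ->
    i n k < imax n ->
    s n k.+1 < soc_threshold (q n) (r n) (eta n) (s n 0%N) ->
    forall l : nat, (l <= k)%N -> e l = itot l ^+ 2.
Proof.
move=> _ _ gamma_gt0 id_ge0 _ eta_gt0 q_gt0 r_ge0 _ _ smeas01 opt n k kK ik_lt sk_lt l lk.
have [feas _] := opt; have [_ [heat_ge _]] := feas.
have s0_le1 : s n 0 <= 1.
  by case: feas => [_ [_ [_ [_ [_ [_ [_ [_ ->]]]]]]]]; case/andP: (smeas01 n).
have [a_gt0 c_gt0] := soc_threshold_margin (q_gt0 n) (eta_gt0 n) (r_ge0 n) s0_le1
  (soc_init_step_le feas eta_gt0 n kK) sk_lt.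
apply: le_anti; rewrite heat_ge ?(leq_ltn_trans lk kK) // andbT leNgt.
apply/negP => slack.
exact: (slack_not_optimal feas (expR_gt0 _) (ltW gamma_gt0) id_ge0 eta_gt0
  (fun n => ltW (q_gt0 n)) r_ge0 kK lk ik_lt a_gt0 c_gt0 slack opt).
Qed.
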